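(* Let $k\ge2$ and $n,t,m_0\ge1$ be integers, and let $\varepsilon\in(0,1)$ and $d,\varepsilon^*>0$ satisfy $d+k\varepsilon^*\le\varepsilon/2$ and $\sqrt{\varepsilon^*}\le\varepsilon/4$. Let $H$ be a $k$-partite $k$-graph with parts $V_1,\dots,V_k$, each of size $n$, such that $\delta'_{k-1}(H)\ge(\frac12+\varepsilon)n$. Suppose $V(H)=V_0\cup W_1\cup\dots\cup W_{kt}$ is a partition such that $|V_0|\le \varepsilon^* kn$, each $V_i\setminus V_0$ is the union of exactly $t$ of the clusters $W_1,\dots,W_{kt}$, all clusters have the same size $m_0$, and all but at most $\varepsilon^*(kt)^k$ of the legal $k$-sets $\{j_1,\dots,j_k\}\subseteq[kt]$ have $(W_{j_1},\dots,W_{j_k})$ $\varepsilon^*$-regular. Let $\mathcal R=\mathcal R(\varepsilon^*,d)$ be the corresponding cluster hypergraph. Then the number of legal $(k-1)$-sets $S\subseteq[kt]$ with $\deg_{\mathcal R}(S)<(\frac12+\frac{\varepsilon}{4})t$ is at most $k^{k+1}\sqrt{\varepsilon^*}\,t^{k-1}$.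
   Context: A $k$-partite $k$-graph $H$ is a $k$-graph with a fixed partition $V(H)=V_1\cup\dots\cup V_k$ such that every edge meets each $V_i$ in at most one vertex. A set $S$ is legal if $|S\cap V_i|\le1$ for all $i$. $\deg_H(S)$ is the number of $(k-|S|)$-sets $S'$ with $S\cup S'\in E(H)$; $\delta'_{k-1}(H)$ is the minimum of $\deg_H(S)$ over legal $(k-1)$-sets. For pairwise disjoint $A_1,\dots,A_k\subseteq V(H)$, $e_H(A_1,\dots,A_k)$ is the number of $(a_1,\dots,a_k)\in A_1\times\dots\times A_k$ with $\{a_1,\dots,a_k\}\in E(H)$, and $d_H(A_1,\dots,A_k)=e_H(A_1,\dots,A_k)/(|A_1|\cdots|A_k|)$. A $k$-tuple $(U_1,\dots,U_k)$ of disjoint sets is $(\varepsilon^*,d')$-regular if $|d_H(A_1,\dots,A_k)-d'|\le\varepsilon^*$ for all $A_i\subseteq U_i$ with $|A_i|\ge\varepsilon^*|U_i|$, and $\varepsilon^*$-regular if it is $(\varepsilon^*,d')$-regular for some $d'\ge0$. In the setting of the statement, an index set $S\subseteq[kt]$ is legal if its clusters lie in distinct parts $V_i$; the cluster hypergraph $\mathcal R(\varepsilon^*,d)$ is the $k$-partite $k$-graph on vertex set $[kt]$ (with the $t$ indices of clusters inside $V_i$ forming its $i$-th part) whose edges are the legal $k$-sets $\{j_1,\dots,j_k\}$ such that $(W_{j_1},\dots,W_{j_k})$ is $\varepsilon^*$-regular and $d_H(W_{j_1},\dots,W_{j_k})\ge d$. *)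

From HB Require Import structures.
From mathcomp Require Import all_boot all_order all_algebra.
From mathcomp Require Import reals.
Set Implicit Arguments. Unset Strict Implicit. Unset Printing Implicit Defensive.
Import Order.TTheory GRing.Theory Num.Theory.
Local Open Scope ring_scope.

(* A k-partite k-graph: vertex finType V, partition map [part : V -> 'I_k]
   (V_i = [set x | part x == i]), edge set [E : {set {set V}}]. *)

Definition vpart (V : finType) (k : nat) (part : V -> 'I_k) (i : 'I_k) : {set V} :=
  [set x | part x == i].

Definition legalV (V : finType) (k : nat) (part : V -> 'I_k) (S : {set V}) : bool :=
  [forall i : 'I_k, #|S :&: vpart part i| <= 1]%N.

Definition kpartite_kgraph (V : finType) (k : nat) (part : V -> 'I_k)
  (E : {set {set V}}) : Prop :=
  forall e, e \in E -> #|e| = k /\ legalV part e.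

Definition deg (T : finType) (E : {set {set T}}) (k : nat) (S : {set T}) : nat :=
  #|[set S' : {set T} | (#|S'| == k - #|S|)%N && (S :|: S' \in E)]|.

Definition eH (V : finType) (k : nat) (E : {set {set V}}) (A : 'I_k -> {set V}) : nat :=
  #|[set f : {ffun 'I_k -> V} |
       [forall i, f i \in A i] && ([set f i | i : 'I_k] \in E)]|.

Definition dH {R : realType} (V : finType) (k : nat) (E : {set {set V}})
  (A : 'I_k -> {set V}) : R :=
  (eH E A)%:R / (\prod_(i < k) (#|A i|)%:R).

Definition regular_with {R : realType} (V : finType) (k : nat) (E : {set {set V}})
  (U : 'I_k -> {set V}) (epsS d' : R) : Prop :=
  forall A : 'I_k -> {set V},
    (forall i, A i \subset U i) ->
    (forall i, epsS * (#|U i|)%:R <= (#|A i|)%:R) ->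
    `|dH E A - d'| <= epsS.

Definition regular {R : realType} (V : finType) (k : nat) (E : {set {set V}})
  (U : 'I_k -> {set V}) (epsS : R) : Prop :=
  exists d' : R, 0 <= d' /\ regular_with E U epsS d'.

Definition cpart (V : finType) (k N : nat) (part : V -> 'I_k) (V0 : {set V})
  (W : 'I_N -> {set V}) (i : 'I_k) : {set 'I_N} :=
  [set j | W j \subset vpart part i :\: V0].

Definition legalI (V : finType) (k N : nat) (part : V -> 'I_k) (V0 : {set V})
  (W : 'I_N -> {set V}) (S : {set 'I_N}) : bool :=
  [forall i : 'I_k, #|S :&: cpart part V0 W i| <= 1]%N.

(* (W_{j_1},...,W_{j_k}) for J = {j_1,...,j_k}: an enumeration g of J *)
Definition enumerates (k N : nat) (g : 'I_k -> 'I_N) (J : {set 'I_N}) : Prop :=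
  injective g /\ [set g i | i : 'I_k] = J.

From HB Require Import structures.
From mathcomp Require Import all_boot all_order all_algebra.
From mathcomp Require Import reals.
From mathcomp Require Import ring lra.
Import Order.TTheory GRing.Theory Num.Theory.

Set Implicit Arguments. Unset Strict Implicit. Unset Printing Implicit Defensive.

(* Fix a legal (k-1)-set S of cluster indices with deg_R(S) < (1/2 + eps/4) t.
   Its clusters meet k-1 of the parts; the t clusters C of the remaining part
   are the candidates to extend S to a k-set.  Averaging the degree condition
   delta'_{k-1}(H) >= (1/2 + eps) n over all transversals of the clusters of S
   (one vertex from each cluster), each extension j |: S contributes at most
   m0^k edges, and strictly less than d m0^k when j |: S is epsS-regular but
   not an edge of R.  Since |V0| <= epsS k n and d + k epsS <= eps/2, this forces
   more than (eps/4) t clusters j in C with j |: S irregular.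

   Every irregular k-set arises from at most k such pairs (S, j), so the
   number of bad S is at most k epsS (kt)^k / ((eps/4) t), which is at most
   k^(k+1) sqrt(epsS) t^(k-1) because sqrt(epsS) <= eps/4. *)

Record cluster_partition (V : finType) (k t : nat) (part : V -> 'I_k)
    (V0 : {set V}) (W : 'I_(k * t) -> {set V}) (m0 : nat) : Prop := ClusterPartition {
  cluster_size_gt0 : (0 < m0)%N;
  cluster_disj_V0 : forall j, [disjoint V0 & W j];
  cluster_disj : forall j j', j != j' -> [disjoint W j & W j'];
  cluster_cover : V0 :|: \bigcup_(j < k * t) W j = [set: V];
  cluster_parts : forall i : 'I_k, exists J : {set 'I_(k * t)},
      #|J| = t /\ vpart part i :\: V0 = \bigcup_(j in J) W j;
  cluster_size : forall j, #|W j| = m0 }.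

Lemma card_bigcup_le (I V : finType) (Q : pred I) (F : I -> {set V}) :
  (#|\bigcup_(j | Q j) F j| <= \sum_(j | Q j) #|F j|)%N.
Proof.
apply: (big_ind2 (fun (A : {set V}) n => #|A| <= n)%N) => [|A1 n1 A2 n2 le1 le2|//].
  by rewrite cards0.
by apply: leq_trans (leq_card_setU A1 A2) _; apply: leq_add.
Qed.

Section Arithmetic.
Local Open Scope ring_scope.

(* The numerical core of the per-S estimate: M = m0^(k-1) transversals,
   m = m0, N = n, T = t, v = |V0|, Sm = sum of extension pairs, G and B the
   numbers of free clusters giving edges of R resp. irregular k-sets; the
   conclusion is that irregular extensions exceed a share eps/4. *)
Lemma irregular_share_arith (F : realFieldType) (M m N T v Sm G B K es d eps : F) :
  0 < M -> 0 < m -> 0 <= T -> 0 < eps -> 0 <= d ->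
  T * m <= N -> v <= es * (K * N) ->
  M * ((1 / 2 + eps) * N) <= M * v + Sm ->
  Sm <= M * m * (G + B) + d * (M * m) * T ->
  d + K * es <= eps / 2 -> G < (1 / 2 + eps / 4) * T ->
  eps / 4 * T < B.
Proof.
move=> M_gt0 m_gt0 T_ge0 eps_gt0 d_ge0 Tm_le v_le avg Sm_le par G_lt.
have per_vertex : (1 / 2 + eps) * N <= v + m * (G + B) + d * m * T.
  by rewrite -(ler_pM2l M_gt0); nra.
have c_ge0 : 0 <= 1 / 2 + eps - K * es by lra.
have per_cluster : (1 / 2 + eps - K * es) * T <= G + B + d * T.
  rewrite -(ler_pM2l m_gt0); nra.
nra.
Qed.

(* The final estimate: if A bad sets, weighted by (eps/4) t, number at most
   k epsS (kt)^k, then A <= k^(k+1) sqrt(epsS) t^(k-1); here s = sqrt(epsS),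
   K = k and T = t. *)
Lemma bad_count_arith (F : realFieldType) (k : nat) (A K T s eps : F) :
  (0 < k)%N -> 0 <= K -> 0 < T -> 0 < s -> s <= eps / 4 ->
  A * (eps / 4 * T) <= K * (s ^+ 2 * (K * T) ^+ k) ->
  A <= K ^+ (k + 1) * s * T ^+ k.-1.
Proof.
case: k => // k _ K_ge0 T_gt0 s_gt0 s_le weighted /=.
set Q := K ^+ (k.+1 + 1) * T ^+ k.
have Q_ge0 : 0 <= Q by rewrite mulr_ge0 ?exprn_ge0 // ltW.
have powKT : K * (s ^+ 2 * (K * T) ^+ k.+1) = T * (Q * s ^+ 2).
  by rewrite /Q exprMn addn1 !exprS; ring.
have e4_gt0 : 0 < eps / 4 by apply: lt_le_trans s_le.
rewrite -(ler_pM2r e4_gt0); apply: le_trans (_ : Q * s ^+ 2 <= _).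
  by rewrite -(ler_pM2r T_gt0) -mulrA [Q * _ * T]mulrC -powKT.
rewrite [_ * s * _]mulrAC -/Q expr2 mulrA.
by rewrite ler_wpM2l // mulr_ge0 // ltW.
Qed.

End Arithmetic.

(* Double counting: if every S in Bad is a (k-1)-set and each j in B S
   extends S to a set j |: S of Irr, then the pairs (S, j) number at most
   k |Irr|, since a k-set J arises only from its k elements j, with S = J \ j. *)
Lemma sum_card_extensions (I : finType) (k : nat) (Irr Bad : {set {set I}})
    (B : {set I} -> {set I}) :
  (0 < k)%N -> (forall S, S \in Bad -> #|S| = k.-1) ->
  (forall S j, S \in Bad -> j \in B S -> j \notin S /\ j |: S \in Irr) ->
  (\sum_(S in Bad) #|B S| <= k * #|Irr|)%N.
Proof.
move=> k_gt0 cardBad extB.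
pose Irr_at j := [set J in Irr | (j \in J) && (#|J| == k)].
have ext_inj j : (\sum_(S in Bad | j \in B S) 1 <= #|Irr_at j|)%N.
  rewrite sum1dep_card -(@card_in_imset _ _ (fun S => j |: S)); last first.
    move=> S1 S2; rewrite !inE => /andP [S1B jB1] /andP [S2B jB2] same.
    have [jS1 _] := extB _ _ S1B jB1; have [jS2 _] := extB _ _ S2B jB2.
    by rewrite -(setU1K jS1) same setU1K.
  apply/subset_leq_card/subsetP => _ /imsetP [S /[!inE] /andP [SB jB] ->].
  have [jS SIrr] := extB _ _ SB jB.
  by rewrite inE SIrr set11 /= cardsU1 jS cardBad // add1n prednK.
rewrite (eq_bigr (fun S => \sum_(j in B S) 1)%N) => [|S _]; last by rewrite sum1_card.
rewrite (exchange_big_dep predT) //=.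
apply: leq_trans (_ : \sum_j #|Irr_at j| <= _)%N; first exact: leq_sum.
under eq_bigr do rewrite /Irr_at -sum1dep_card.
rewrite (exchange_big_dep (mem Irr)) /=; last by move=> j J _ /andP [].
rewrite mulnC -sum_nat_const; apply: leq_sum => J _.
rewrite sum1dep_card; case: (#|J| =P k) => [<-|_].
  by apply/subset_leq_card/subsetP => x; rewrite inE => /and3P [].
by rewrite eq_card0 // => x; rewrite !inE !andbF.
Qed.

Section ClusterPartition.
Variables (k t m0 : nat) (V : finType) (part : V -> 'I_k) (V0 : {set V})
  (W : 'I_(k * t) -> {set V}) (x0 : V).
Hypothesis CP : cluster_partition part V0 W m0.

Local Notation cp := (cpart part V0 W).

Lemma cluster_nonempty j : exists x, x \in W j.
Proof. by apply/card_gt0P; rewrite (cluster_size CP) (cluster_size_gt0 CP). Qed.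

Lemma cluster_uniq j j' x : x \in W j -> x \in W j' -> j = j'.
Proof.
move=> xj xj'; apply/eqP; apply: contraTT xj' => /(cluster_disj CP) D.
by rewrite (disjointFr D xj).
Qed.

Lemma cluster_notin_V0 j x : x \in W j -> x \notin V0.
Proof. by move=> xj; rewrite (disjointFl (cluster_disj_V0 CP j) xj). Qed.

Lemma cpart_eq i (J : {set 'I_(k * t)}) :
  vpart part i :\: V0 = \bigcup_(j in J) W j -> cp i = J.
Proof.
move=> defVi; apply/setP => j; rewrite /cpart inE defVi.
apply/idP/idP => [sub_j | jJ]; last exact: bigcup_sup.
have [x xj] := cluster_nonempty j.
have /bigcupP [j' j'J xj'] := subsetP sub_j x xj.
by rewrite (cluster_uniq xj xj').
Qed.

Lemma card_cpart i : #|cp i| = t.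
Proof. by have [J [cardJ defVi]] := cluster_parts CP i; rewrite (cpart_eq defVi). Qed.

Lemma cpart_cover i : vpart part i :\: V0 = \bigcup_(j in cp i) W j.
Proof. by have [J [_ defVi]] := cluster_parts CP i; rewrite (cpart_eq defVi). Qed.

Definition cluster_part j : 'I_k := part (odflt x0 [pick x in W j]).

Lemma pick_cluster_mem j : odflt x0 [pick x in W j] \in W j.
Proof.
case: pickP => [x //|noW]; have [x xj] := cluster_nonempty j.
by move: (noW x); rewrite xj.
Qed.

Lemma part_cluster_cpart j i x : j \in cp i -> x \in W j -> part x = i.
Proof.
rewrite /cpart inE => /subsetP sub_j /sub_j.
by rewrite !inE => /andP [_ /eqP].
Qed.

Lemma cpart_cluster_part j : j \in cp (cluster_part j).
Proof.
have xj := pick_cluster_mem j.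
have : odflt x0 [pick x in W j] \in vpart part (cluster_part j) :\: V0.
  by rewrite !inE (cluster_notin_V0 xj) /cluster_part eqxx.
rewrite cpart_cover => /bigcupP [j' j'c xj'].
by move: j'c; rewrite -(cluster_uniq xj xj').
Qed.

Lemma cluster_part_cpart j i : j \in cp i -> cluster_part j = i.
Proof. by move=> ji; apply: part_cluster_cpart ji (pick_cluster_mem j). Qed.

Lemma part_cluster j x : x \in W j -> part x = cluster_part j.
Proof. exact: part_cluster_cpart (cpart_cluster_part j). Qed.

Lemma card_bigcup_clusters (J : {set 'I_(k * t)}) :
  #|\bigcup_(j in J) W j| = (#|J| * m0)%N.
Proof.
pose F j := if j \in J then W j else set0.
have -> : \bigcup_(j in J) W j = \bigcup_j F j by rewrite big_mkcond.
rewrite -sum1_card partition_disjoint_bigcup; last first.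
  move=> i j ij; rewrite /F; case: ifP => _; last by rewrite -setI_eq0 set0I.
  by case: ifP => _; [apply: (cluster_disj CP) | rewrite -setI_eq0 setI0].
rewrite -sum_nat_const [RHS]big_mkcond /=; apply: eq_bigr => j _.
by rewrite /F; case: ifP => _; rewrite sum1_card ?cards0 ?(cluster_size CP).
Qed.

Lemma vpart_card_ge i : (t * m0 <= #|vpart part i|)%N.
Proof.
rewrite -(card_cpart i) -card_bigcup_clusters -cpart_cover.
exact/subset_leq_card/subsetDl.
Qed.

Lemma legalI_cluster_part_inj S :
  legalI part V0 W S -> {in S &, injective cluster_part}.
Proof.
move=> /forallP legS j1 j2 j1S j2S same.
apply: (card_le1_eqP (legS (cluster_part j1))); rewrite inE ?j1S ?j2S /=;
  [rewrite same|]; exact: cpart_cluster_part.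
Qed.

Section Extensions.
Variable E : {set {set V}}.
Hypothesis HE : kpartite_kgraph part E.
Hypothesis k_gt0 : (0 < k)%N.
Variable S : {set 'I_(k * t)}.
Hypothesis legS : legalI part V0 W S.
Hypothesis cardS : #|S| = k.-1.

(* Transversals of the clusters of S: one vertex of W j for each j in S. *)
Definition transversals : {set {ffun 'I_(k * t) -> V}} :=
  [set phi | phi \in pfamily x0 S W].

Definition trace (phi : {ffun 'I_(k * t) -> V}) : {set V} := phi @: S.

(* The clusters of the unique part avoided by the clusters of S. *)
Definition free_clusters : {set 'I_(k * t)} :=
  [set j | (j \notin S) && (cluster_part j \notin cluster_part @: S)].

Definition ext_count (phi : {ffun 'I_(k * t) -> V}) j : nat :=
  #|[set v in W j | trace phi :|: [set v] \in E]|.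

Definition ext_pairs j : {set {ffun 'I_(k * t) -> V} * V} :=
  [set p | (p.1 \in transversals) &&
           ((p.2 \in W j) && (trace p.1 :|: [set p.2] \in E))].

Lemma ext_pairsP j p :
  reflect [/\ p.1 \in transversals, p.2 \in W j & trace p.1 :|: [set p.2] \in E]
          (p \in ext_pairs j).
Proof.
rewrite [p \in ext_pairs j]in_set.
by apply: (iffP andP) => [[-> /andP [-> ->]] | [-> -> ->]].
Qed.

Lemma card_transversals : #|transversals| = (m0 ^ k.-1)%N.
Proof.
rewrite cardsE card_pfamily /image_mem (eq_map (cluster_size CP)) -cardS cardE.
by elim: (enum S) => //= _ s ->; rewrite expnS.
Qed.

Lemma transversalsP phi : phi \in transversals ->
  (forall j, j \in S -> phi j \in W j) /\ (forall j, j \notin S -> phi j = x0).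
Proof.
rewrite inE => /pfamilyP [supp_phi phiW]; split => // j jS.
apply/eqP; apply: contraNT jS => phij; exact: (subsetP supp_phi).
Qed.

(* Clusters are disjoint, so the trace has k-1 vertices. *)
Lemma card_trace phi : phi \in transversals -> #|trace phi| = k.-1.
Proof.
move=> /transversalsP [phiW _]; rewrite card_in_imset ?cardS // => j1 j2 j1S j2S.
by move=> same; apply: (cluster_uniq (phiW _ j1S)); rewrite same phiW.
Qed.

Lemma legalV_trace phi : phi \in transversals -> legalV part (trace phi).
Proof.
move=> /transversalsP [phiW _]; apply/forallP => i.
apply: leq_trans (forallP legS i).
apply: leq_trans (leq_imset_card phi _).
apply/subset_leq_card/subsetP => x; rewrite !inE.
move=> /andP [/imsetP [j jS ->] /eqP phij_i]; apply/imsetP; exists j => //.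
by rewrite inE jS -phij_i (part_cluster (phiW _ jS)) cpart_cluster_part.
Qed.

Lemma ext_notin_trace phi v : phi \in transversals ->
  trace phi :|: [set v] \in E -> v \notin trace phi.
Proof.
move=> phiX edge; apply/negP => v_in.
have [card_edge _] := HE edge.
move: card_edge; have /setUidPl -> : [set v] \subset trace phi by rewrite sub1set.
rewrite card_trace // => k_eq.
by move: (ltn_predL k); rewrite k_gt0 {1}k_eq ltnn.
Qed.

Lemma ext_part phi v j' : phi \in transversals -> trace phi :|: [set v] \in E ->
  j' \in S -> part v != cluster_part j'.
Proof.
move=> phiX edge j'S; apply/eqP => same_part.
have [phiW _] := transversalsP phiX.
have [_ /forallP /(_ (part v)) /card_le1_eqP legal_edge] := HE edge.
have v_eq : v = phi j'.
  apply: legal_edge; rewrite !inE ?eqxx ?orbT //.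
  by rewrite (part_cluster (phiW _ j'S)) same_part eqxx andbT imset_f.
by move/negP: (ext_notin_trace phiX edge); rewrite v_eq imset_f.
Qed.

Lemma deg_trace_le phi : phi \in transversals ->
  (deg E k (trace phi) <= #|V0| + \sum_(j in free_clusters) ext_count phi j)%N.
Proof.
move=> phiX; pose D := [set v | trace phi :|: [set v] \in E].
have deg_le_D : (deg E k (trace phi) <= #|D|)%N.
  apply: leq_trans (leq_imset_card (@set1 V) D).
  apply/subset_leq_card/subsetP => S'; rewrite !inE card_trace //.
  move=> /andP [cardS' edge].
  have : #|S'| == 1%N by move: cardS'; rewrite -subn1 subKn.
  by case/cards1P => v defS'; apply/imsetP; exists v; rewrite // inE -defS'.
apply: leq_trans deg_le_D _.
apply: leq_trans (leq_add (leqnn _) (card_bigcup_le (mem free_clusters)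
  (fun j => [set v in W j | trace phi :|: [set v] \in E]))).
apply: leq_trans (leq_card_setU V0 _).
apply/subset_leq_card/subsetP => v; rewrite inE => edge.
rewrite inE; case: (boolP (v \in V0)) => //= vV0.
have : v \in V0 :|: \bigcup_(j < k * t) W j by rewrite (cluster_cover CP).
rewrite inE (negbTE vV0) /= => /bigcupP [j _ vj].
apply/bigcupP; exists j; last by rewrite inE vj edge.
rewrite inE; apply/andP; split.
  apply/negP => jS; move: (ext_part phiX edge jS).
  by rewrite (part_cluster vj) eqxx.
apply/negP => /imsetP [j' j'S same].
by move: (ext_part phiX edge j'S); rewrite -same (part_cluster vj) eqxx.
Qed.

Lemma sum_ext_count j :
  (\sum_(phi in transversals) ext_count phi j = #|ext_pairs j|)%N.
Proof.
rewrite /ext_count; under eq_bigr => phi _ do rewrite -sum1dep_card.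
rewrite pair_big_dep /= sum1dep_card.
by apply: eq_card => p; rewrite !inE.
Qed.

Lemma card_ext_pairs_le j : (#|ext_pairs j| <= m0 ^ k)%N.
Proof.
apply: leq_trans (_ : #|setX transversals (W j)| <= _)%N.
  apply/subset_leq_card/subsetP => p; rewrite !inE.
  by case/andP => -> /andP [-> _].
by rewrite cardsX card_transversals (cluster_size CP) -expnSr prednK.
Qed.

(* At most t clusters are free: they all lie in the one part missed by S. *)
Lemma card_free_clusters : (#|free_clusters| <= t)%N.
Proof.
have card_partsS : #|cluster_part @: S| = k.-1.
  by rewrite card_in_imset ?cardS //; apply: legalI_cluster_part_inj.
have : #|~: (cluster_part @: S)| == 1%N.
  have := cardsC (cluster_part @: S); rewrite card_ord card_partsS => sum_k.
  by rewrite -(eqn_add2l k.-1) sum_k addn1 prednK.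
case/cards1P => i0 def_i0.
apply: (@leq_trans #|cpart part V0 W i0|); last by rewrite card_cpart.
apply/subset_leq_card/subsetP => j; rewrite inE => /andP [_ j_free].
have : cluster_part j \in ~: (cluster_part @: S) by rewrite inE.
by rewrite def_i0 inE => /eqP <-; apply: cpart_cluster_part.
Qed.

Lemma legal_extension j : j \in free_clusters ->
  legalI part V0 W (j |: S) /\ #|j |: S| = k.
Proof.
rewrite inE => /andP [jS j_free]; split; last first.
  by rewrite cardsU1 jS cardS add1n prednK.
apply/forallP => i; case: (eqVneq (cluster_part j) i) => [<-|ji].
  apply: leq_trans (_ : #|[set j]| <= 1)%N; last by rewrite cards1.
  apply/subset_leq_card/subsetP => j'.
  rewrite in_setI in_setU1 in_set1 => /andP [/orP [//|j'S] j'i].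
  case/negP: j_free; apply/imsetP; exists j' => //.
  by rewrite (cluster_part_cpart j'i).
apply: leq_trans (forallP legS i).
apply/subset_leq_card/subsetP => j'.
rewrite in_setI in_setU1 => /andP [/orP [/eqP j'j|j'S] j'i].
  by move: ji; rewrite -j'j (cluster_part_cpart j'i) eqxx.
by rewrite in_setI j'S.
Qed.

Section Glue.
Variables (j : 'I_(k * t)) (g : 'I_k -> 'I_(k * t)).
Hypothesis jS : j \notin S.
Hypothesis g_enum : enumerates g (j |: S).

(* The k-tuple of H obtained from a pair (transversal of S, vertex of W j),
   read along the enumeration g of j |: S. *)
Definition glue (p : {ffun 'I_(k * t) -> V} * V) : {ffun 'I_k -> V} :=
  [ffun i => if g i == j then p.2 else p.1 (g i)].

Lemma enum_mem i : g i \in j |: S.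
Proof. by case: g_enum => _ <-; apply: imset_f. Qed.

Lemma enum_hit j' : j' \in j |: S -> exists i, g i = j'.
Proof. by case: g_enum => _ <- /imsetP [i _ ->]; exists i. Qed.

Lemma enum_hit_S j' : j' \in S -> exists2 i, g i = j' & g i != j.
Proof.
move=> j'S; have [|i gi] := enum_hit (j' := j'); first by rewrite in_setU1 j'S orbT.
by exists i; rewrite // gi; apply: contraNneq jS => <-.
Qed.

(* Gluing is injective on extension pairs: the transversal and the vertex
   are read back from the coordinates of g. *)
Lemma glue_inj : {in ext_pairs j &, injective glue}.
Proof.
move=> [a b] [c e] /ext_pairsP [aX _ _] /ext_pairsP [cX _ _] same.
have same_i i : glue (a, b) i = glue (c, e) i by rewrite same.
have [_ a_out] := transversalsP aX; have [_ c_out] := transversalsP cX.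
congr pair.
  apply/ffunP => j'; have [j'S|j'S] := boolP (j' \in S); last by rewrite a_out ?c_out.
  have [i <- gij] := enum_hit_S j'S.
  by move: (same_i i); rewrite !ffunE /= (negbTE gij).
have [|i gi] := enum_hit (j' := j); first by rewrite in_setU1 eqxx.
by move: (same_i i); rewrite !ffunE /= gi eqxx.
Qed.

Lemma glue_vertices phi v :
  [set glue (phi, v) i | i : 'I_k] = trace phi :|: [set v].
Proof.
apply/setP => x; apply/imsetP/idP => [[i _ ->]|].
  rewrite ffunE /= in_setU in_set1; case: eqP => [_|gij]; first by rewrite eqxx orbT.
  move: (enum_mem i); rewrite in_setU1 => /orP [/eqP /gij //|giS].
  by rewrite imset_f.
rewrite in_setU in_set1 => /orP [/imsetP [j' j'S ->]|/eqP ->].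
  have [i gi gij] := enum_hit_S j'S.
  by exists i; rewrite // ffunE /= (negbTE gij) gi.
have [|i gi] := enum_hit (j' := j); first by rewrite in_setU1 eqxx.
by exists i; rewrite // ffunE /= gi eqxx.
Qed.

Lemma card_ext_pairs_le_eH : (#|ext_pairs j| <= eH E (W \o g))%N.
Proof.
rewrite /eH -(card_in_imset glue_inj).
apply/subset_leq_card/subsetP => _ /imsetP [[phi v] p_ext ->].
case/ext_pairsP: p_ext => /= phiX vW edge.
have [phiW _] := transversalsP phiX.
rewrite in_set glue_vertices edge andbT; apply/forallP => i /=.
rewrite ffunE /=; case: eqP => [-> //|gij].
by apply: phiW; move: (enum_mem i); rewrite in_setU1 => /orP [/eqP /gij|].
Qed.

End Glue.

Definition extensions_in (F : {set {set 'I_(k * t)}}) : {set 'I_(k * t)} :=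
  [set j in free_clusters | j |: S \in F].

Lemma deg_cluster_ge (ER : {set {set 'I_(k * t)}}) :
  (#|extensions_in ER| <= deg ER k S)%N.
Proof.
rewrite -(card_imset _ (@set1_inj _)).
apply/subset_leq_card/subsetP => _ /imsetP [j j_in ->].
move: j_in; rewrite !inE => /andP [_ edge].
rewrite cards1 cardS.
have -> : (k - k.-1 = 1)%N by rewrite -subn1 subKn.
by rewrite eqxx /= setUC.
Qed.

Section Densities.
Local Open Scope ring_scope.
Variables (R : realType) (n : nat) (eps d epsS : R).
Variables (ER Irr : {set {set 'I_(k * t)}}).
Hypothesis d_gt0 : 0 < d.
Hypothesis min_codeg : forall T : {set V}, legalV part T -> #|T| = k.-1 ->
  (1 / 2 + eps) * n%:R <= (deg E k T)%:R.
Hypothesis Irr_regular : forall J : {set 'I_(k * t)},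
  legalI part V0 W J -> #|J| = k -> J \notin Irr ->
  exists g : 'I_k -> 'I_(k * t), enumerates g J /\ regular E (W \o g) epsS.
Hypothesis ER_def : forall J : {set 'I_(k * t)}, J \in ER <->
  [/\ legalI part V0 W J, #|J| = k &
      exists g : 'I_k -> 'I_(k * t), [/\ enumerates g J, regular E (W \o g) epsS
                                       & d <= dH E (W \o g)]].

Lemma transversal_average :
  (#|transversals|)%:R * ((1 / 2 + eps) * n%:R) <=
  (#|transversals| * #|V0| + \sum_(j in free_clusters) #|ext_pairs j|)%N%:R.
Proof.
apply: le_trans (_ : \sum_(phi in transversals) (deg E k (trace phi))%:R <= _).
  rewrite mulr_natl -sumr_const; apply: ler_sum => phi phiX.
  by apply: min_codeg; [apply: legalV_trace | apply: card_trace].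
rewrite -natr_sum ler_nat; apply: leq_trans (leq_sum _ deg_trace_le) _.
rewrite big_split /= sum_nat_const exchange_big /=.
by apply: leq_add => //; apply: eq_leq; apply: eq_bigr => j _; apply: sum_ext_count.
Qed.

Lemma dH_clusters (g : 'I_k -> 'I_(k * t)) :
  dH E (W \o g) = (eH E (W \o g))%:R / (m0 ^ k)%N%:R :> R.
Proof.
rewrite /dH (eq_bigr (fun _ => m0%:R)) => [|i _]; last by rewrite /= (cluster_size CP).
by rewrite prodr_const card_ord natrX.
Qed.

Lemma sparse_extension j : j \in free_clusters ->
  j |: S \notin ER -> j |: S \notin Irr -> (#|ext_pairs j|)%:R < d * (m0 ^ k)%N%:R.
Proof.
move=> j_free notER notIrr.
have jS : j \notin S by move: j_free; rewrite inE => /andP [].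
have [legJ cardJ] := legal_extension j_free.
have [g [g_enum g_regular]] := Irr_regular legJ cardJ notIrr.
have sparse : dH E (W \o g) < d.
  rewrite ltNge; apply: contra notER => dense.
  by apply/ER_def; split => //; exists g.
have m0k_gt0 : 0 < (m0 ^ k)%N%:R :> R by rewrite ltr0n expn_gt0 (cluster_size_gt0 CP).
apply: le_lt_trans (_ : (eH E (W \o g))%:R < _).
  by rewrite ler_nat card_ext_pairs_le_eH.
by rewrite -ltr_pdivrMr // -dH_clusters.
Qed.

Lemma ext_pairs_bound j : j \in free_clusters ->
  (#|ext_pairs j|)%:R <=
  (m0 ^ k)%N%:R * ((j |: S \in ER) + (j |: S \in Irr))%N%:R + d * (m0 ^ k)%N%:R.
Proof.
move=> j_free; have [in_some|] := boolP ((j |: S \in ER) || (j |: S \in Irr)).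
  have one_le : 1 <= ((j |: S \in ER) + (j |: S \in Irr))%N%:R :> R.
    by rewrite ler1n; move: in_some; case: (_ \in ER); case: (_ \in Irr).
  apply: le_trans (_ : (m0 ^ k)%N%:R <= _); first by rewrite ler_nat card_ext_pairs_le.
  rewrite -[X in X <= _]addr0 lerD ?ler_peMr //.
  by rewrite mulr_ge0 // ltW.
rewrite negb_or => /andP [notER notIrr].
by rewrite (negbTE notER) (negbTE notIrr) mulr0 add0r ltW // sparse_extension.
Qed.

Lemma sum_ext_pairs_bound :
  (\sum_(j in free_clusters) #|ext_pairs j|)%N%:R <=
  (m0 ^ k)%N%:R * (#|extensions_in ER| + #|extensions_in Irr|)%N%:R
    + d * (m0 ^ k)%N%:R * t%:R.
Proof.
rewrite natr_sum; apply: le_trans (ler_sum _ ext_pairs_bound) _.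
rewrite big_split /= -mulr_sumr sumr_const -natr_sum.
have -> : (\sum_(j in free_clusters) ((j |: S \in ER) + (j |: S \in Irr)))%N =
          (#|extensions_in ER| + #|extensions_in Irr|)%N.
  rewrite big_split /= -!sum1dep_card !big_mkcondr /=.
  by congr (_ + _)%N; apply: eq_bigr => j _; case: ifP.
apply: lerD => //; rewrite -[_ *+ _]mulr_natr ler_wpM2l ?ler_nat ?card_free_clusters //.
by rewrite mulr_ge0 // ltW.
Qed.

Hypothesis eps_gt0 : 0 < eps.
Hypothesis small_params : d + k%:R * epsS <= eps / 2.
Hypothesis part_size : forall i, #|vpart part i| = n.
Hypothesis small_V0 : (#|V0|)%:R <= epsS * (k * n)%:R.

Lemma many_irregular_extensions :
  (deg ER k S)%:R < (1 / 2 + eps / 4) * t%:R ->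
  eps / 4 * t%:R < (#|extensions_in Irr|)%:R.
Proof.
move=> low_deg.
have avg := transversal_average.
have sum_le := sum_ext_pairs_bound.
rewrite natrD natrM card_transversals in avg.
have m0k : (m0 ^ k)%N%:R = (m0 ^ k.-1)%N%:R * m0%:R :> R.
  by rewrite -natrM -expnSr prednK.
rewrite m0k natrD in sum_le.
have tm_le : t%:R * m0%:R <= n%:R :> R.
  by rewrite -natrM ler_nat -(part_size (Ordinal k_gt0)) vpart_card_ge.
have G_le : (#|extensions_in ER|)%:R <= (deg ER k S)%:R :> R.
  by rewrite ler_nat deg_cluster_ge.
have V0_le := small_V0; rewrite natrM in V0_le.
apply: (irregular_share_arith _ _ _ _ _ tm_le V0_le avg sum_le small_params).
- by rewrite ltr0n expn_gt0 (cluster_size_gt0 CP).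
- by rewrite ltr0n (cluster_size_gt0 CP).
- by [].
- exact: eps_gt0.
- exact: ltW.
- exact: le_lt_trans G_le low_deg.
Qed.

End Densities.

End Extensions.
End ClusterPartition.

Unset Implicit Arguments.
Local Open Scope ring_scope.

Theorem proposition6p3 (R : realType) (k n t m0 : nat) (eps d epsS : R)
  (V : finType) (part : V -> 'I_k) (E : {set {set V}})
  (V0 : {set V}) (W : 'I_(k * t) -> {set V}) (ER : {set {set 'I_(k * t)}}) :
  (2 <= k)%N -> (1 <= n)%N -> (1 <= t)%N -> (1 <= m0)%N ->
  0 < eps < 1 -> 0 < d -> 0 < epsS ->
  d + k%:R * epsS <= eps / 2 ->
  Num.sqrt epsS <= eps / 4 ->
  (* H is a k-partite k-graph with parts of size n *)
  kpartite_kgraph part E ->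
  (forall i : 'I_k, #|vpart part i| = n) ->
  (* delta'_{k-1}(H) >= (1/2 + eps) n *)
  (forall S : {set V}, legalV part S -> #|S| = k.-1 ->
     (1 / 2 + eps) * n%:R <= (deg E k S)%:R) ->
  (* partition V(H) = V0 u W_1 u ... u W_{kt} *)
  (forall j, [disjoint V0 & W j]) ->
  (forall j j', j != j' -> [disjoint W j & W j']) ->
  V0 :|: \bigcup_(j < k * t) W j = [set: V] ->
  (#|V0|)%:R <= epsS * (k * n)%:R ->
  (forall i : 'I_k, exists J : {set 'I_(k * t)},
      #|J| = t /\ vpart part i :\: V0 = \bigcup_(j in J) W j) ->
  (forall j, #|W j| = m0) ->
  (* all but at most eps*(kt)^k legal k-sets are eps*-regular *)
  (exists Irr : {set {set 'I_(k * t)}},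
      (#|Irr|)%:R <= epsS * ((k * t)%:R) ^+ k /\
      forall J : {set 'I_(k * t)}, legalI part V0 W J -> #|J| = k -> J \notin Irr ->
        exists g : 'I_k -> 'I_(k * t), enumerates g J /\ regular E (W \o g) epsS) ->
  (* R = R(eps*, d) is the cluster hypergraph *)
  (forall J : {set 'I_(k * t)}, J \in ER <->
     [/\ legalI part V0 W J, #|J| = k &
         exists g : 'I_k -> 'I_(k * t), [/\ enumerates g J, regular E (W \o g) epsS
                                          & d <= dH E (W \o g)]]) ->
  (#|[set S : {set 'I_(k * t)} | legalI part V0 W S && (#|S| == k.-1)%N &&
       ((deg ER k S)%:R < (1 / 2 + eps / 4) * t%:R)]|)%:R
    <= k%:R ^+ (k + 1) * Num.sqrt epsS * t%:R ^+ k.-1.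
Proof.
move=> k_ge2 _ t_gt0 m0_gt0 /andP [eps_gt0 _] d_gt0 epsS_gt0 small_params
  sqrt_small HE part_size min_codeg V0_disj W_disj cover small_V0 parts W_size
  [Irr [card_Irr Irr_regular]] ER_def.
have k_gt0 : (0 < k)%N by apply: leq_trans k_ge2.
have CP : cluster_partition part V0 W m0 by split.
have kt_gt0 : (0 < k * t)%N by rewrite muln_gt0 k_gt0.
have [x0 _] := cluster_nonempty CP (Ordinal kt_gt0).
set Bad := [set S | _].
pose irr_ext S := extensions_in part W x0 S Irr.
have many_irr S : S \in Bad -> eps / 4 * t%:R < (#|irr_ext S|)%:R.
  rewrite inE => /andP [/andP [legS /eqP cardS] low_deg].
  exact: (many_irregular_extensions x0 CP HE k_gt0 legS cardS d_gt0 min_codeg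
            Irr_regular ER_def eps_gt0 small_params part_size small_V0 low_deg).
have pairs_le : (\sum_(S in Bad) #|irr_ext S| <= k * #|Irr|)%N.
  apply: sum_card_extensions k_gt0 _ _ => [S | S j _]; rewrite !inE.
    by case/andP => /andP [_ /eqP].
  by case/andP => /andP [-> _] ->.
have weighted : (#|Bad|)%:R * (eps / 4 * t%:R) <= k%:R * (epsS * (k * t)%:R ^+ k).
  rewrite mulr_natl -sumr_const.
  apply: le_trans (_ : \sum_(S in Bad) (#|irr_ext S|)%:R <= _).
    by apply: ler_sum => S /many_irr /ltW.
  rewrite -natr_sum; apply: le_trans (_ : (k * #|Irr|)%N%:R <= _).
    by rewrite ler_nat.
  by rewrite natrM ler_wpM2l.
apply: bad_count_arith k_gt0 _ _ _ sqrt_small _ => //; first by rewrite ltr0n.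
  by rewrite sqrtr_gt0.
by rewrite sqr_sqrtr -?natrM // ltW.
Qed.
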